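(* Let $(S_n,X_n)_{n\ge 0}$ be an alternating non-homogeneous semi-Markov process with $S_0=1$, $X_0=0$, whose semi-Markov kernels are, for each $x\ge0$, Weibull distributions $$G_T(x,\tau)=1-e^{-(\lambda_T(x)\tau)^{k_T(x)}},\qquad \tau\ge0,\ T\in\{Y,Z\},$$ with measurable shape functions $k_Y,k_Z:[0,\infty)\to(0,\infty)$ and rate functions $\lambda_Y,\lambda_Z:[0,\infty)\to(0,\infty)$. Suppose (i) there is $c>0$ with $\lambda_Y(x)\le c$ and $\lambda_Z(x)\le c$ for all $x\ge0$, and (ii) either there is $k\ge1$ with $1\le k_Y(x)\le k$ and $1\le k_Z(x)\le k$ for all $x\ge 0$, or there is $k>0$ with $k_Y(x)=k_Z(x)=k$ for all $x\ge0$. Then $\mathbb P(X_\infty<\infty)=0$.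
   Context: Let $(S_n,X_n)_{n\ge0}$ be random variables on a probability space with $S_n\in\{0,1\}$, $0=X_0\le X_1\le X_2\le\cdots$, $S_0=1$, and alternating states: $S_n=1$ for even $n$ and $S_n=0$ for odd $n$. Write $T_{n+1}=X_{n+1}-X_n$ (sojourn times). The process is called an alternating non-homogeneous semi-Markov process with semi-Markov kernels $G_Y,G_Z$ if for every $n\ge 0$ the conditional distribution of $T_{n+1}$ given $(S_0,X_0),\dots,(S_n,X_n)$ depends only on $(S_n,X_n)$ (and not on $n$), with $\mathbb P(T_{n+1}\le \tau\mid S_n=1,X_n=x)=G_Y(x,\tau)$ and $\mathbb P(T_{n+1}\le\tau\mid S_n=0,X_n=x)=G_Z(x,\tau)$ for all $x,\tau\ge 0$; here for each $x\ge0$, $G_Y(x,\cdot)$ and $G_Z(x,\cdot)$ are distribution functions on $[0,\infty)$, jointly measurable in $(x,\tau)$, absolutely continuous with densities $g_Y(x,\cdot)$, $g_Z(x,\cdot)$. Periods spent in state $1$ are called $Y$-phases, periods in state $0$ are $Z$-phases. The explosion time is $X_\infty=\lim_{n\to\infty}X_n$. *)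

From HB Require Import structures.
From mathcomp Require Import all_boot all_order all_algebra.
From mathcomp Require Import all_classical all_reals all_analysis.
Set Implicit Arguments. Unset Strict Implicit. Unset Printing Implicit Defensive.
Import Order.TTheory GRing.Theory Num.Theory.
Local Open Scope classical_set_scope.
Local Open Scope ring_scope.

Definition weibull_kernel {R : realType} (lam k : R -> R) (x tau : R) : R :=
  1 - expR (- ((lam x * tau) `^ (k x))).

(* sigma-algebra generated by X_0, ..., X_n (the states S_0..S_n are
   deterministic, so they carry no information). *)
Definition history {d} {T : measurableType d} {R : realType}
  (X : nat -> T -> R) (n : nat) : set (set T) :=
  <<s [set A | exists i (B : set R), (i <= n)%N /\ measurable B /\
                                     A = X i @^-1` B] >>.

(* Kernel in force at step n: state S_n = 1 (Y-phase) for even n,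
   S_n = 0 (Z-phase) for odd n. *)
Definition kernel_at {R : realType} (GY GZ : R -> R -> R) (n : nat) :=
  if odd n then GZ else GY.

(* (S_n, X_n) with S_n alternating (S_0 = 1) is an alternating non-homogeneous
   semi-Markov process with semi-Markov kernels GY, GZ:
   X_0 = 0, X_n nondecreasing, X_n random variables, and for every n, the
   conditional distribution of T_{n+1} = X_{n+1} - X_n given the past
   (S_0,X_0),...,(S_n,X_n) is G_{S_n}(X_n, .), i.e. for every event A of the
   past and every tau >= 0,
     P(A /\ T_{n+1} <= tau) = E[1_A G_{S_n}(X_n, tau)]. *)
Definition alt_semi_markov {d} {T : measurableType d} {R : realType}
  (P : probability T R) (X : nat -> T -> R) (GY GZ : R -> R -> R) : Prop :=
  [/\ (forall n, measurable_fun setT (X n)),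
      (forall w, X 0%N w = 0),
      (forall n w, X n w <= X n.+1 w) &
      (forall n (A : set T) (tau : R), history X n A -> 0 <= tau ->
         P (A `&` [set w | X n.+1 w - X n w <= tau]) =
         (\int[P]_(w in A) (kernel_at GY GZ n (X n w) tau)%:E)%E)].

Definition explosion_time {d} {T : measurableType d} {R : realType}
  (X : nat -> T -> R) (w : T) : \bar R :=
  limn (fun n => (X n w)%:E).

From HB Require Import structures.
From mathcomp Require Import all_boot all_order all_algebra.
From mathcomp Require Import all_classical all_reals all_analysis.
From mathcomp Require Import measurable_realfun.
Import Order.TTheory GRing.Theory Num.Theory numFieldNormedType.Exports.
Local Open Scope classical_set_scope.
Local Open Scope ring_scope.

(* The Weibull rates are bounded by c and every shape is positive.  Hence n
   consecutive sojourns are all at most 1/c with probability at most q^n, so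
   almost surely infinitely many sojourns exceed 1/c.  On the other hand a
   nondecreasing sequence with a finite limit has increments eventually
   below 1/c. *)

Lemma weibull_kernel_le {R : realType} (lam k : R -> R) (x tau : R) :
  0 < k x -> 0 < lam x * tau <= 1 ->
  0 <= weibull_kernel lam k x tau <= 1 - expR (-1).
Proof.
move=> k_gt0 lt_bound; rewrite /weibull_kernel.
have p_le1 : (lam x * tau) `^ k x <= 1.
  by rewrite -(powRr0 (lam x * tau)) ger_powR // ltW.
apply/andP; split.
  by rewrite subr_ge0 -[leRHS]expR0 ler_expR oppr_le0 powR_ge0.
by rewrite lerD2l lerN2 ler_expR lerN2.
Qed.

(* No measurability is required: the integral of a nonnegative function is the
   supremum of the integrals of the simple functions below it. *)
Lemma ge0_le_integral_nonmeasurable d (T : measurableType d) {R : realType}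
    (mu : {measure set T -> \bar R}) (D : set T) (f g : T -> \bar R) :
  (forall x, D x -> 0 <= f x)%E -> (forall x, D x -> f x <= g x)%E ->
  (\int[mu]_(x in D) f x <= \int[mu]_(x in D) g x)%E.
Proof.
move=> f_ge0 le_fg.
have g_ge0 x : D x -> (0 <= g x)%E by move=> Dx; exact: le_trans (f_ge0 _ Dx) (le_fg _ Dx).
rewrite !ge0_integralE //; apply: ereal_sup_le => _ [h le_hf <-]; exists h => //= x.
apply: le_trans (le_hf x) _; rewrite /patch; case: ifPn => // /set_mem; exact: le_fg.
Qed.

Section history.
Context {d} {T : measurableType d} {R : realType} (X : nat -> T -> R).

Lemma historyT n : history X n setT.
Proof. exact: (@measurableT _ (g_sigma_algebraType _)). Qed.

Lemma historyI n A B : history X n A -> history X n B -> history X n (A `&` B).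
Proof. exact: (@measurableI _ (g_sigma_algebraType _)). Qed.

Lemma history_le n m : (n <= m)%N -> history X n `<=` history X m.
Proof.
move=> le_nm; apply: smallest_sub; first exact: smallest_sigma_algebra.
move=> _ [i [B [le_in [mB ->]]]]; apply: sub_sigma_algebra.
by exists i, B; rewrite (leq_trans le_in le_nm).
Qed.

Lemma history_increment_le n (t : R) :
  history X n.+1 [set w | X n.+1 w - X n w <= t].
Proof.
pose mT := g_sigma_algebraType
  [set A | exists i (B : set R), (i <= n.+1)%N /\ measurable B /\ A = X i @^-1` B].
have mX i : (i <= n.+1)%N -> measurable_fun setT (X i : mT -> R).
  by move=> le_in _ B mB; rewrite setTI; apply: sub_sigma_algebra; exists i, B.
have := measurable_funB (mX _ (leqnn _)) (mX _ (leqnSn _)) measurableT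
  (measurable_itv `]-oo, t]).
by rewrite setTI; congr history; apply/seteqP; split => w /=; rewrite in_itv.
Qed.

Hypothesis mX : forall n, measurable_fun setT (X n).

Lemma history_measurable n : history X n `<=` measurable.
Proof.
apply: smallest_sub; first exact: sigma_algebra_measurable.
by move=> _ [i [B [_ [mB ->]]]]; rewrite -[X i @^-1` B]setTI; exact: mX.
Qed.

End history.

Section geometric_tail.
Context d (T : measurableType d) (R : realType) (P : probability T R).
Variables (F : nat -> set (set T)) (D : nat -> set T) (q : R).
Hypotheses (F_measurable : forall n, F n `<=` measurable)
  (F_le : forall n, F n `<=` F n.+1)
  (FT : forall n, F n setT)
  (FI : forall n A B, F n A -> F n B -> F n (A `&` B))
  (FD : forall n, F n.+1 (D n))
  (q_ge0 : 0 <= q) (q_lt1 : q < 1)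
  (PD : forall n A, F n A -> (P (A `&` D n) <= q%:E * P A)%E).

Local Notation window m j := (\big[setI/setT]_(m <= n < m + j) D n).

Lemma F_window m j : F (m + j) (window m j).
Proof.
elim: j => [|j IH]; first by rewrite addn0 big_geq.
by rewrite addnS big_nat_recr ?leq_addr //=; apply: FI (FD _); exact: F_le.
Qed.

Lemma measure_window_le m j : (P (window m j) <= (q ^+ j)%:E)%E.
Proof.
elim: j => [|j IH]; first by rewrite addn0 big_geq // probability_setT.
rewrite addnS big_nat_recr ?leq_addr //= exprS EFinM.
apply: le_trans (PD _ _ (F_window m j)) _; exact: lee_wpmul2l.
Qed.

Lemma measure_bigcap_tail m : P (\bigcap_(n in [set n | (m <= n)%N]) D n) = 0%E.
Proof.
set A := \bigcap_(_ in _) _.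
have mD n : measurable (D n) by exact: F_measurable (FD n).
have A_le j : (P A <= (q ^+ j)%:E)%E.
  apply: le_trans (measure_window_le m j); apply: le_measure; rewrite ?inE.
  - by apply: bigcap_measurableType => n _; exact: mD.
  - exact: F_measurable (F_window m j).
  move=> w Aw; elim: j => [|j IH]; first by rewrite addn0 big_geq.
  by rewrite addnS big_nat_recr ?leq_addr //=; split => //; apply: Aw; exact: leq_addr.
apply/eqP; rewrite eq_le measure_ge0 andbT.
have q_cvg0 : (fun j => (q ^+ j)%:E) @ \oo --> 0%:E.
  by apply: cvg_EFin; [exact: nearW | apply: cvg_expr; rewrite ger0_norm].
by apply: cvge_to_ge q_cvg0 _; exact: nearW.
Qed.

End geometric_tail.

Section nondecreasing_sequences.
Context {R : realType} {u : R ^nat}.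
Hypothesis u_nd : nondecreasing_seq u.

Lemma nondecreasing_limn_EFin_ltyP :
  (limn (fun n => (u n)%:E) < +oo)%E <-> exists M : nat, forall n, u n <= M%:R.
Proof.
have u_nd' : nondecreasing_seq (fun n => (u n)%:E).
  by move=> m n le_mn; rewrite lee_fin u_nd.
have ub n : ((u n)%:E <= ereal_sup (range (fun n => (u n)%:E)))%E.
  by apply: ereal_sup_ubound; exists n.
rewrite (cvg_lim _ (ereal_nondecreasing_cvgn u_nd')) //; split.
- move: ub; case: ereal_sup => [r ub _| // | ub]; last by have := ub 0%N.
  exists (Num.bound `|r|) => n.
  apply/ltW/(le_lt_trans _ (archi_boundP (normr_ge0 r))).
  by rewrite (le_trans _ (ler_norm r)) // -lee_fin.
- move=> [M le_uM]; apply: (@le_lt_trans _ _ (M%:R)%:E); last exact: ltry.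
  by apply: ge_ereal_sup => _ [n _ <-]; rewrite lee_fin.
Qed.

Lemma nondecreasing_increment_le (t : R) : has_ubound (range u) -> 0 < t ->
  \forall n \near \oo, u n.+1 - u n <= t.
Proof.
move=> u_ub t_gt0; apply: (cvgr_le (0 : R)) => //.
rewrite -(subrr (sup (range u))).
apply: cvgB; last exact: nondecreasing_cvgn.
by rewrite (cvg_shiftS u); exact: nondecreasing_cvgn.
Qed.

End nondecreasing_sequences.

Section explosion_time.
Context {d} {T : measurableType d} {R : realType} {X : nat -> T -> R}.
Hypothesis X_nd : forall w, nondecreasing_seq (X ^~ w).

Lemma measurable_explosion_time_lty : (forall n, measurable_fun setT (X n)) ->
  measurable [set w | (explosion_time X w < +oo)%E].
Proof.
move=> mX.
have -> : [set w | (explosion_time X w < +oo)%E] =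
    \bigcup_(M in [set: nat]) \bigcap_(n in [set: nat]) X n @^-1` `]-oo, M%:R].
  apply/seteqP; split => w /=.
  - move/(nondecreasing_limn_EFin_ltyP (X_nd w)) => [M le_XM].
    by exists M => // n _ /=; rewrite in_itv /= le_XM.
  - move=> [M _ le_XM]; apply/(nondecreasing_limn_EFin_ltyP (X_nd w)).
    by exists M => n; have := le_XM n I; rewrite /= in_itv.
apply: bigcup_measurable => M _; apply: bigcap_measurableType => n _.
by rewrite -[X n @^-1` _]setTI; exact: mX measurableT _ (measurable_itv _).
Qed.

Lemma explosion_time_lty_sub (t : R) : 0 < t ->
  [set w | (explosion_time X w < +oo)%E] `<=`
  \bigcup_m \bigcap_(n in [set n | (m <= n)%N]) [set w | X n.+1 w - X n w <= t].
Proof.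
move=> t_gt0 w /(nondecreasing_limn_EFin_ltyP (X_nd w)) [M le_XM].
have X_ub : has_ubound (range (X ^~ w)) by exists M%:R => _ [n _ <-].
by have [m _ incr_le] := nondecreasing_increment_le (X_nd w) t X_ub t_gt0; exists m.
Qed.

End explosion_time.

Lemma alt_semi_markov_increment_le d (T : measurableType d) (R : realType)
    (P : probability T R) (X : nat -> T -> R) (GY GZ : R -> R -> R) (t q : R) :
  alt_semi_markov P X GY GZ -> 0 <= t ->
  (forall n w, 0 <= kernel_at GY GZ n (X n w) t <= q) ->
  forall n A, history X n A ->
  (P (A `&` [set w | (X n.+1 w - X n w <= t)%R]) <= q%:E * P A)%E.
Proof.
move=> [mX _ _ kernel_law] t_ge0 G_bound n A hA; rewrite kernel_law //.
apply: (@le_trans _ _ (\int[P]_(w in A) (cst q%:E) w)%E).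
  by apply: ge0_le_integral_nonmeasurable => w _; rewrite lee_fin;
    case/andP: (G_bound n w).
by rewrite integral_cst //; exact: history_measurable mX _ _ hA.
Qed.

Theorem proposition2 (d : measure_display) (T : measurableType d)
  (R : realType) (P : probability T R) (X : nat -> T -> R)
  (kY kZ lamY lamZ : R -> R) :
  measurable_fun [set x : R | 0 <= x] kY ->
  measurable_fun [set x : R | 0 <= x] kZ ->
  measurable_fun [set x : R | 0 <= x] lamY ->
  measurable_fun [set x : R | 0 <= x] lamZ ->
  (forall x, 0 <= x -> 0 < kY x /\ 0 < kZ x /\ 0 < lamY x /\ 0 < lamZ x) ->
  alt_semi_markov P X (weibull_kernel lamY kY) (weibull_kernel lamZ kZ) ->
  (exists c, 0 < c /\ forall x, 0 <= x -> lamY x <= c /\ lamZ x <= c) ->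
  ((exists k, 1 <= k /\ forall x, 0 <= x ->
       (1 <= kY x <= k) /\ (1 <= kZ x <= k)) \/
   (exists k, 0 < k /\ forall x, 0 <= x -> kY x = k /\ kZ x = k)) ->
  P [set w | (explosion_time X w < +oo)%E] = 0%E.
Proof.
move=> _ _ _ _ pos sm [c [c_gt0 lam_le]] _.
have [mX X0 X_le _] := sm.
have X_nd w : nondecreasing_seq (X ^~ w) by apply/nondecreasing_seqP => n; exact: X_le.
have X_ge0 n w : 0 <= X n w.
  by elim: n => [|n IH]; [rewrite X0 | exact: le_trans IH (X_le n w)].
have t_gt0 : 0 < c^-1 by rewrite invr_gt0.
pose q := 1 - expR (-1) : R.
have [q_ge0 q_lt1] : 0 <= q /\ q < 1.
  by rewrite subr_ge0 gtrDl oppr_lt0 expR_gt0 -[leRHS]expR0 ler_expR lerN10.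
have G_le n w : 0 <= kernel_at (weibull_kernel lamY kY) (weibull_kernel lamZ kZ)
    n (X n w) c^-1 <= q.
  have [kY_gt0 [kZ_gt0 [lamY_gt0 lamZ_gt0]]] := pos _ (X_ge0 n w).
  have [lamY_le lamZ_le] := lam_le _ (X_ge0 n w).
  by rewrite /kernel_at; case: ifP => _; apply: weibull_kernel_le;
    rewrite // mulr_gt0 //= ler_pdivrMr // mul1r.
pose D n := [set w | X n.+1 w - X n w <= c^-1].
have tail_null m : P (\bigcap_(n in [set n | (m <= n)%N]) D n) = 0%E.
  apply: (@measure_bigcap_tail _ _ _ P (history X) D q) => //.
  - exact: history_measurable.
  - by move=> n; apply: history_le.
  - exact: historyT.
  - exact: historyI.
  - by move=> n; exact: history_increment_le X n c^-1.
  - exact: alt_semi_markov_increment_le sm (ltW t_gt0) G_le.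
have mtail m : measurable (\bigcap_(n in [set n | (m <= n)%N]) D n).
  apply: bigcap_measurableType => n _.
  exact: history_measurable mX _ _ (history_increment_le X n c^-1).
apply/eqP; rewrite eq_le measure_ge0 andbT.
apply: le_trans (measure_sigma_subadditive P mtail
  (measurable_explosion_time_lty X_nd mX) (explosion_time_lty_sub X_nd c^-1 t_gt0)) _.
by rewrite eseries0 // => m _ _; exact: tail_null.
Qed.
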